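(* For every integer $r\geq 2$, $$\sum_{M\geq1}g_r(M)z^M=\frac{z}{1-2z}\cdot\frac{(1-z)^{r-1}-z^{r-1}}{(1-z)^{r-1}-z^r}.$$
   Context: The perimeter of a nonempty partition $\lambda$ with largest part $\lambda_1$ and $\ell(\lambda)$ parts is $\lambda_1+\ell(\lambda)-1$. For $r\geq2$, $g_r(M)$ is the number of partitions with perimeter $M$ none of whose parts is divisible by $r$. *)

From mathcomp Require Import all_boot all_order all_algebra.
Set Implicit Arguments. Unset Strict Implicit. Unset Printing Implicit Defensive.
Import GRing.Theory.

Definition is_partition (s : seq nat) : bool :=
  sorted geq s && all (fun x => 0 < x) s.

Definition perimeter (s : seq nat) : nat := head 0 s + size s - 1.

Definition gr_pred (r M : nat) (s : seq nat) : bool :=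
  [&& is_partition s, s != [::], perimeter s == M
    & all (fun x => ~~ (r %| x)) s].

(* g_r(M): number of partitions of perimeter M none of whose parts is
   divisible by r.  Every such partition has at most M parts, each at
   most M, so it is counted exactly once as a tuple of length L <= M
   with entries in 'I_(M+1). *)
Definition g (r M : nat) : nat :=
  \sum_(L < M.+1) #|[set t : L.-tuple 'I_M.+1 | gr_pred r M (map val t)]|.

Definition gser (r N : nat) : {poly int} :=
  \sum_(1 <= M < N.+1) (g r M)%:R *: 'X^M.

From mathcomp Require Import all_boot all_order all_algebra.
From mathcomp Require Import zify ring.
Set Implicit Arguments. Unset Strict Implicit. Unset Printing Implicit Defensive.

(* A nonincreasing sequence of L parts, all at most a and none divisible by r,
   is the same thing as a walk of L + a steps from height 0 to height a that
   goes up by one or stays flat, the flat steps occurring at the heights given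
   by the parts, hence never at a multiple of r.  So g_r(M) counts the walks of
   length M whose final height (the largest part) is not a multiple of r:
   g_r = T - S_0, where T counts all walks and S_j those ending at a height
   congruent to j mod r.  Appending a step gives T(n+1) = 2 T(n) - S_0(n),
   S_j(n+1) = S_(j-1)(n) + S_j(n) for 0 < j < r and S_0(n+1) = S_(r-1)(n);
   for the generating functions (1 - 2z) T = 1 - z S_0,
   (1 - z)^(r-1) S_(r-1) = z^(r-1) S_0 and S_0 = 1 + z S_(r-1), whence
   ((1 - z)^(r-1) - z^r) S_0 = (1 - z)^(r-1) and the formula follows.
   Power series are handled through their truncations, two series agreeing
   up to z^(n-1) when X^n divides the difference. *)

Lemma big_tuple_cons (T : finType) L (F : seq T -> nat) :
  \sum_(t : L.+1.-tuple T) F t = \sum_(x : T) \sum_(t : L.-tuple T) F (x :: t).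
Proof.
rewrite pair_big (reindex (fun p : T * L.-tuple T => [tuple of p.1 :: p.2])) //=.
exists (fun t : L.+1.-tuple T => (thead t, [tuple of behead t])) => [[x t] _|t _].
  by congr pair; apply: val_inj.
by rewrite /= -tuple_eta.
Qed.

Section Walks.

Variable r : nat.

Fixpoint nwalks (n x : nat) : nat :=
  match n with
  | 0 => x == 0
  | n.+1 => (if x is x.+1 then nwalks n x else 0) + ~~ (r %| x) * nwalks n x
  end.

Lemma nwalks_gt n x : n < x -> nwalks n x = 0.
Proof. by elim: n x => [|n IHn] [|x] //= lt_nx; rewrite !IHn ?muln0 //; lia. Qed.

Lemma nwalks_diag n : nwalks n n = 1.
Proof. by elim: n => //= n ->; rewrite nwalks_gt ?muln0. Qed.

Lemma nwalks_sum_last_flat L a :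
  nwalks (L.+1 + a) a = \sum_(x < a.+1) ~~ (r %| x) * nwalks (L + x) x.
Proof.
elim: a => [|a IHa]; first by rewrite big_ord1 /= addn0 dvdn0.
by rewrite big_ord_recr /= -IHa !addnS.
Qed.

Lemma rfree_gt0 x : ~~ (r %| x) -> 0 < x.
Proof. by case: x; rewrite ?dvdn0. Qed.

Definition rfree_chain (a : nat) (s : seq nat) : bool :=
  path geq a s && all (fun y => ~~ (r %| y)) s.

Lemma rfree_chain_cons a x s :
  rfree_chain a (x :: s) = [&& x <= a & ~~ (r %| x)] && rfree_chain x s.
Proof. by rewrite /rfree_chain /= -!andbA; case: path => /=; rewrite ?andbF // andbCA. Qed.

Lemma gr_pred_cons M x s :
  gr_pred r M (x :: s) = [&& x + size s == M & ~~ (r %| x)] && rfree_chain x s.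
Proof.
rewrite /gr_pred /is_partition /perimeter /rfree_chain /= subn1 addnS /=.
have [|/rfree_gt0 ->] := boolP (r %| x); first by rewrite !andbF.
have [all_rfree|] := boolP (all (fun y => ~~ (r %| y)) s); last by rewrite !andbF.
by rewrite (sub_all rfree_gt0 all_rfree); case: path; case: (_ == _).
Qed.

Lemma sum_rfree_chain K L a : a < K ->
  \sum_(t : L.-tuple 'I_K) rfree_chain a (map val t) = nwalks (L + a) a.
Proof.
elim: L a => [|L IHL] a lt_aK.
  rewrite add0n nwalks_diag -[RHS](card_tuple 0 'I_K) -sum1_card.
  by apply: eq_bigr => t _; rewrite tuple0.
rewrite (big_tuple_cons L (fun t => nat_of_bool (rfree_chain a (map val t)))).
rewrite nwalks_sum_last_flat.
rewrite (big_ord_widen K (fun x => ~~ (r %| x) * nwalks (L + x) x)) // [RHS]big_mkcond /=.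
apply: eq_bigr => x _; under eq_bigr do rewrite /= rfree_chain_cons -mulnb.
by rewrite -big_distrr /= IHL // ltnS; case: (x <= a).
Qed.

Lemma sum_gr_pred_tuple M L :
  \sum_(t : L.+1.-tuple 'I_M.+1) gr_pred r M (map val t) =
  \sum_(x < M.+1) ((x + L == M) && ~~ (r %| x)) * nwalks (L + x) x.
Proof.
rewrite (big_tuple_cons _ (fun t => nat_of_bool (gr_pred r M (map val t)))).
apply: eq_bigr => x _; under eq_bigr do rewrite /= gr_pred_cons size_map size_tuple -mulnb.
by rewrite -big_distrr /= sum_rfree_chain.
Qed.

Lemma g_nwalks M : g r M = \sum_(x < M.+1) ~~ (r %| x) * nwalks M x.
Proof.
have card_sum L : #|[set t : L.-tuple 'I_M.+1 | gr_pred r M (map val t)]| =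
    \sum_(t : L.-tuple 'I_M.+1) gr_pred r M (map val t).
  by rewrite -sum1dep_card big_mkcond.
rewrite /g big_ord_recl card_sum big1 ?add0n => [|t _]; last by rewrite tuple0.
under eq_bigr do rewrite card_sum sum_gr_pred_tuple.
rewrite exchange_big /=; apply: eq_bigr => x _.
have [_|ndvd] := boolP (r %| x); first by rewrite big1 // => L _; rewrite andbF.
have /andP[x_gt0 le_xM] : 0 < x <= M by rewrite rfree_gt0 // -ltnS ltn_ord.
under eq_bigr do rewrite andbT mulnbl.
rewrite -big_mkcond (eq_bigl (fun L : 'I_M => L == M - x :> nat)) => [|L]; last first.
  by apply/eqP/eqP; lia.
by rewrite (big_ord1_eq _ (fun L => nwalks (L + x) x)) subnK // ifT //; lia.
Qed.

Definition nwalks_total n := \sum_(x < n.+1) nwalks n x.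
Definition nwalks_mod j n := \sum_(x < n.+1) (x %% r == j) * nwalks n x.

Lemma nwalks_total0 : nwalks_total 0 = 1.
Proof. by rewrite /nwalks_total big_ord1. Qed.

Lemma nwalks_mod0 j : nwalks_mod j 0 = (j == 0).
Proof. by rewrite /nwalks_mod big_ord1 /= mod0n muln1 eq_sym. Qed.

Lemma sum_nwalksS (c : nat -> nat) n :
  \sum_(x < n.+2) c x * nwalks n.+1 x =
  \sum_(x < n.+1) c x.+1 * nwalks n x + \sum_(x < n.+1) c x * (~~ (r %| x) * nwalks n x).
Proof.
under eq_bigr do rewrite /= mulnDr.
rewrite big_split /= [X in _ + X]big_ord_recr /= nwalks_gt // !muln0 addn0.
by rewrite big_ord_recl /= muln0.
Qed.

Lemma sum_rfree_nwalks n :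
  \sum_(x < n.+1) ~~ (r %| x) * nwalks n x + nwalks_mod 0 n = nwalks_total n.
Proof.
rewrite -big_split; apply: eq_bigr => x _ /=.
by rewrite -mulnDl /dvdn; case: (x %% r == 0); rewrite mul1n.
Qed.

Lemma g_add_nwalks_mod0 M : g r M + nwalks_mod 0 M = nwalks_total M.
Proof. by rewrite g_nwalks sum_rfree_nwalks. Qed.

Lemma nwalks_totalS n : nwalks_total n.+1 + nwalks_mod 0 n = (nwalks_total n).*2.
Proof.
have := sum_nwalksS (fun => 1) n; rewrite !(eq_bigr _ (fun x _ => mul1n _)) /nwalks_total => ->.
by rewrite -addnA sum_rfree_nwalks addnn.
Qed.

Hypothesis r_gt0 : 0 < r.

Lemma modSn y : y.+1 %% r = if y %% r == r.-1 then 0 else (y %% r).+1.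
Proof.
have := ltn_pmod y r_gt0.
rewrite -[y.+1]addn1 -modnDml addn1; case: eqP => [-> _|ne lt].
  by rewrite prednK ?modnn.
rewrite modn_small //; lia.
Qed.

Lemma modSn_eq j y : 0 < j < r -> (y.+1 %% r == j) = (y %% r == j.-1).
Proof. by move=> ?; rewrite modSn; case: (y %% r =P r.-1) => ?; apply/eqP/eqP; lia. Qed.

Lemma modSn_eq0 y : (y.+1 %% r == 0) = (y %% r == r.-1).
Proof. by rewrite modSn; case: (y %% r =P r.-1). Qed.

Lemma nwalks_modS j n :
  0 < j < r -> nwalks_mod j n.+1 = nwalks_mod j.-1 n + nwalks_mod j n.
Proof.
move=> lt_0jr; rewrite /nwalks_mod (sum_nwalksS (fun x => nat_of_bool (x %% r == j))).
congr addn; apply: eq_bigr => x _; first by rewrite modSn_eq.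
by rewrite mulnA mulnb /dvdn; case: eqP => // ->; move: lt_0jr; case: j.
Qed.

Lemma nwalks_mod0S n : nwalks_mod 0 n.+1 = nwalks_mod r.-1 n.
Proof.
rewrite /nwalks_mod (sum_nwalksS (fun x => nat_of_bool (x %% r == 0))).
rewrite [X in _ + X]big1 ?addn0 => [|x _]; last by rewrite mulnA mulnb /dvdn andbN.
by apply: eq_bigr => x _; rewrite modSn_eq0.
Qed.

End Walks.

Import GRing.Theory.
Local Open Scope ring_scope.

Section TruncatedSeries.

Variable R : idomainType.

Lemma dvdXn_coefP n (p : {poly R}) :
  reflect (forall i, (i < n)%N -> p`_i = 0) ('X^n %| p).
Proof.
rewrite /dvdp -Pdiv.IdomainMonic.take_poly_modp.
apply: (iffP eqP) => [p_n0 i lt_in | p_n0].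
  by have := coef_take_poly n p i; rewrite p_n0 coef0 lt_in.
by apply/polyP => i; rewrite coef_take_poly coef0; case: ltnP => // /p_n0.
Qed.

Definition gfpoly n (a : nat -> R) : {poly R} := \poly_(i < n) a i.

Lemma gfpoly_shift n (a : nat -> R) (q : {poly R}) :
  (forall k, (k.+1 < n)%N -> a k.+1 = q`_k) -> 'X^n %| gfpoly n a - (a 0%N)%:P - 'X * q.
Proof.
move=> aS; apply/dvdXn_coefP => -[|k] lt_kn; rewrite !coefB coefC coefXM coef_poly lt_kn /=.
  by rewrite subrr subr0.
by rewrite subr0 aS ?subrr.
Qed.

End TruncatedSeries.

Section WalkSeries.

Variables (R : idomainType) (r n : nat).
Hypothesis r_gt0 : (0 < r)%N.

Definition gf_total : {poly R} := gfpoly n (fun k => (nwalks_total r k)%:R).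
Definition gf_class j : {poly R} := gfpoly n (fun k => (nwalks_mod r j k)%:R).

Lemma gf_total_rec : 'X^n %| (1 - 'X *+ 2) * gf_total - (1 - 'X * gf_class 0).
Proof.
have -> : (1 - 'X *+ 2) * gf_total - (1 - 'X * gf_class 0) =
    gf_total - ((nwalks_total r 0)%:R)%:P - 'X * (gf_total *+ 2 - gf_class 0).
  by rewrite nwalks_total0 polyC1; ring.
apply: gfpoly_shift => k lt_kn; rewrite coefB coefMn !coef_poly ltnW //.
by rewrite mulr2n -natrD addnn -(nwalks_totalS r k) natrD addrK.
Qed.

Lemma gf_class_rec j : (0 < j < r)%N -> 'X^n %| (1 - 'X) * gf_class j - 'X * gf_class j.-1.
Proof.
move=> lt_0jr.
have -> : (1 - 'X) * gf_class j - 'X * gf_class j.-1 =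
    gf_class j - ((nwalks_mod r j 0)%:R)%:P - 'X * (gf_class j.-1 + gf_class j).
  by rewrite nwalks_mod0 gtn_eqF ?polyC0; [ring | case/andP: lt_0jr].
apply: gfpoly_shift => k lt_kn; rewrite coefD !coef_poly ltnW //.
by rewrite nwalks_modS // natrD.
Qed.

Lemma gf_class0_rec : 'X^n %| gf_class 0 - (1 + 'X * gf_class r.-1).
Proof.
have -> : gf_class 0 - (1 + 'X * gf_class r.-1) =
    gf_class 0 - ((nwalks_mod r 0 0)%:R)%:P - 'X * gf_class r.-1.
  by rewrite nwalks_mod0 eqxx polyC1; ring.
apply: gfpoly_shift => k lt_kn; rewrite coef_poly ltnW //.
by rewrite nwalks_mod0S.
Qed.

Lemma gf_class_chain j : (j <= r.-1)%N ->
  'X^n %| (1 - 'X) ^+ j * gf_class j - 'X ^+ j * gf_class 0.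
Proof.
elim: j => [|j IHj] le_jr; first by rewrite !expr0 !mul1r subrr dvdp0.
have -> : (1 - 'X) ^+ j.+1 * gf_class j.+1 - 'X ^+ j.+1 * gf_class 0 =
    (1 - 'X) ^+ j * ((1 - 'X) * gf_class j.+1 - 'X * gf_class j) +
    'X * ((1 - 'X) ^+ j * gf_class j - 'X ^+ j * gf_class 0).
  by rewrite !exprS; ring.
have lt_0jr : (0 < j.+1 < r)%N by lia.
by rewrite dvdp_add ?dvdp_mull ?gf_class_rec // IHj // ltnW.
Qed.

Lemma gf_class0_denom :
  'X^n %| ((1 - 'X) ^+ r.-1 - 'X ^+ r) * gf_class 0 - (1 - 'X) ^+ r.-1.
Proof.
have -> : ((1 - 'X) ^+ r.-1 - 'X ^+ r) * gf_class 0 - (1 - 'X) ^+ r.-1 =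
    (1 - 'X) ^+ r.-1 * (gf_class 0 - (1 + 'X * gf_class r.-1)) +
    'X * ((1 - 'X) ^+ r.-1 * gf_class r.-1 - 'X ^+ r.-1 * gf_class 0).
  by rewrite -[in 'X ^+ r](prednK r_gt0) exprS; ring.
by rewrite dvdp_add ?dvdp_mull ?gf_class0_rec ?gf_class_chain.
Qed.

End WalkSeries.

Arguments gf_total {R}.
Arguments gf_class {R}.

Lemma g0 r : g r 0 = 0%N.
Proof. by rewrite g_nwalks big_ord1 dvdn0. Qed.

Lemma gser_walks r N : gser r N = gf_total r N.+1 - gf_class r N.+1 0.
Proof.
apply/polyP => i; rewrite coefB !coef_poly coef_sum.
under eq_bigr do rewrite coefZ coefXn mulr_natr mulrb eq_sym.
rewrite -big_mkcond big_nat1_eq -(g_add_nwalks_mod0 r i) natrD.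
by case: i => [|i]; rewrite ?g0 /= ?add0r ?subrr //; case: ifP; rewrite ?addrK ?subr0.
Qed.

Theorem mainTheorem13 (r : nat) (hr : (2 <= r)%N) (N i : nat) (hi : (i <= N)%N) :
  (gser r N * ((1 - 'X *+ 2) * ((1 - 'X) ^+ (r - 1) - 'X ^+ r)))`_i
  = ('X * ((1 - 'X) ^+ (r - 1) - 'X ^+ (r - 1)) : {poly int})`_i.
Proof.
have r_gt0 : (0 < r)%N by apply: ltnW.
rewrite subn1; set D := (1 - 'X) ^+ r.-1 - 'X ^+ r.
pose S : {poly int} := gf_class r N.+1 0.
have key : 'X^(N.+1) %| gser r N * ((1 - 'X *+ 2) * D) - 'X * ((1 - 'X) ^+ r.-1 - 'X ^+ r.-1).
  have -> : gser r N * ((1 - 'X *+ 2) * D) - 'X * ((1 - 'X) ^+ r.-1 - 'X ^+ r.-1) =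
      ((1 - 'X *+ 2) * gf_total r N.+1 - (1 - 'X * S)) * D -
      (1 - 'X) * (D * S - (1 - 'X) ^+ r.-1).
    by rewrite gser_walks -/S /D -[in 'X ^+ r](prednK r_gt0) exprS; ring.
  by rewrite dvdp_sub ?(dvdp_mulr _ (gf_total_rec _ _ _))
             ?(dvdp_mull _ (gf_class0_denom _ _ _)).
by apply/eqP; rewrite -subr_eq0 -coefB; apply/eqP/(dvdXn_coefP _ _ key).
Qed.
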